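(* Let $\mathbb{F}$ be a field, $X$ a finite set, $I$ an ideal of the free associative algebra $\mathbb{F}\langle X\rangle$, and $A=\mathbb{F}\langle X\rangle/I$. Let $<$ be a monomial order on $X^*$ and let $\widetilde{A_<}$ be the associated monomial algebra of $A$ with respect to $<$. Suppose there exist a real polynomial $f(x)$ of degree $d\ge 1$ and an integer $N$ such that for all $u,v\in X^*$ with $|u|\ge N$, $$u<v \implies |u|\le f(|v|).$$ Then $$\operatorname{GKdim}(\widetilde{A_<})\le \operatorname{GKdim}(A)\le d\cdot \operatorname{GKdim}(\widetilde{A_<}).$$
   Context: All algebras are associative and unital over a field $\mathbb{F}$. $X^*$ is the free monoid on $X$ (words, with empty word $1$), and $|u|$ denotes the length of a word $u$. A monomial order on $X^*$ is a well order $<$ on $X^*$ such that $u<v$ implies $w_1uw_2<w_1vw_2$ for all $w_1,w_2\in X^*$. For $0\ne g\in\mathbb{F}\langle X\rangle$, $\overline{g}$ denotes its leading monomial, i.e. the $<$-largest word appearing in $g$ with nonzero coefficient. For an ideal $I$, $\overline{I}=\{\overline{g}\mid 0\neq g\in I\}$, and the associated monomial algebra of $A=\mathbb{F}\langle X\rangle/I$ with respect to $<$ is $\widetilde{A_<}=\mathbb{F}\langle X\rangle/J$, where $J$ is the ideal generated by $\overline{I}$. $\operatorname{GKdim}$ denotes Gelfand–Kirillov dimension. *)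

From Stdlib Require Import Reals ClassicalEpsilon.
From Coquelicot Require Import Rbar Lim_seq.
From HB Require Import structures.
From mathcomp Require Import all_boot all_algebra.
Set Implicit Arguments. Unset Strict Implicit. Unset Printing Implicit Defensive.
Import GRing.Theory.

Section FreeAlgebra.
Variables (F : fieldType) (X : finType).
Local Open Scope ring_scope.

Definition word := seq X.

(* Elements of F<X> : functions X^* -> F (coefficient of each word);
   genuine elements of F<X> are those of finite support. *)
Definition ncpoly := word -> F.

Definition fin_supp (p : ncpoly) : Prop :=
  exists s : seq word, forall w, w \notin s -> p w = 0.

Definition nc_zero : ncpoly := fun _ => 0.
Definition nc_add (p q : ncpoly) : ncpoly := fun w => p w + q w.
Definition nc_mul (p q : ncpoly) : ncpoly :=
  fun w => \sum_(i < (size w).+1) p (take i w) * q (drop i w).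
Definition nc_mon (u : word) : ncpoly := fun w => (w == u)%:R.

Definition is_ideal (K : ncpoly -> Prop) : Prop :=
  [/\ (forall p, K p -> fin_supp p),
      K nc_zero,
      (forall p q, K p -> K q -> K (nc_add p q)),
      (forall p q, fin_supp p -> K q -> K (nc_mul p q)) &
      (forall p q, K p -> fin_supp q -> K (nc_mul p q))].

Definition monomial_order (lt : word -> word -> Prop) : Prop :=
  [/\ (forall u, ~ lt u u),
      (forall u v w, lt u v -> lt v w -> lt u w),
      (forall u v, [\/ lt u v, u = v | lt v u]),
      well_founded lt &
      (forall u v w1 w2, lt u v -> lt (w1 ++ u ++ w2) (w1 ++ v ++ w2))].

Definition leading_monomial (lt : word -> word -> Prop) (g : ncpoly) (u : word) : Prop :=
  g u != 0 /\ (forall w, g w != 0 -> w <> u -> lt w u).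

Definition lead_set (lt : word -> word -> Prop) (K : ncpoly -> Prop) (u : word) : Prop :=
  exists g, K g /\ leading_monomial lt g u.

Definition gen_ideal (S : word -> Prop) (p : ncpoly) : Prop :=
  forall K, is_ideal K -> (forall u, S u -> K (nc_mon u)) -> K p.

(* J = ideal generated by \overline{I}; the associated monomial algebra is F<X>/J *)
Definition assoc_monomial_ideal (lt : word -> word -> Prop) (K : ncpoly -> Prop) :=
  gen_ideal (lead_set lt K).

(* p lies in the span of the words of length <= n, i.e. in V^n, V = F + span X *)
Definition deg_le (n : nat) (p : ncpoly) : Prop :=
  forall w, (n < size w)%N -> p w = 0.

Definition lin_comb (c : nat -> F) (ps : seq ncpoly) : ncpoly :=
  fun w => \sum_(i < size ps) c i * (nth nc_zero ps i) w.

Definition indep_mod (K : ncpoly -> Prop) (ps : seq ncpoly) : Prop :=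
  forall c, K (lin_comb c ps) -> forall i, (i < size ps)%N -> c i = 0.

(* k = dim_F of the image of V^n in F<X>/K *)
Definition is_quot_filt_dim (K : ncpoly -> Prop) (n k : nat) : Prop :=
  (exists ps, size ps = k /\ (forall p, List.In p ps -> deg_le n p) /\ indep_mod K ps) /\
  (forall ps, (forall p, List.In p ps -> deg_le n p) -> indep_mod K ps -> (size ps <= k)%N).

Definition quot_filt_dim (K : ncpoly -> Prop) (n : nat) : nat :=
  epsilon (inhabits 0%N) (is_quot_filt_dim K n).

Definition GKdim (K : ncpoly -> Prop) : Rbar :=
  LimSup_seq (fun n => Rdiv (ln (INR (quot_filt_dim K n))) (ln (INR n))).

End FreeAlgebra.

Definition real_poly_eval (a : nat -> R) (d : nat) (x : R) : R :=
  sum_f_R0 (fun i => Rmult (a i) (pow x i)) d.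

(* Let S be the set of leading monomials of I and call a word normal when none of its
   factors lies in S; S generates the monomial ideal J of the associated monomial algebra.
   The normal words of length <= n give a basis of V^n in F<X>/J, and they stay linearly
   independent in A = F<X>/I, since a nontrivial combination lying in I would have a normal
   leading monomial in S.  Hence dim V^n(F<X>/J) <= dim V^n(A), which is the first inequality.
   Conversely, reducing a polynomial of degree <= n modulo I by cancelling leading monomials
   only produces words below its leading word; by the growth hypothesis these have length at
   most M n^d, so dim V^n(A) <= dim V^(M n^d)(F<X>/J), and dividing the logarithms by log n
   gives GKdim A <= d GKdim (F<X>/J). *)

From Stdlib Require Import Reals Classical ClassicalEpsilon FunctionalExtensionality Lra.
From Coquelicot Require Import Rcomplements Rbar Lim_seq Hierarchy.
From HB Require Import structures.
From mathcomp Require Import all_boot all_algebra zify.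
Set Implicit Arguments. Unset Strict Implicit. Unset Printing Implicit Defensive.
Import GRing.Theory.

Definition asbool (Q : Prop) : bool :=
  if excluded_middle_informative Q then true else false.

Lemma asboolP (Q : Prop) : reflect Q (asbool Q).
Proof. by rewrite /asbool; case: excluded_middle_informative; constructor. Qed.

Lemma In_nth (T : Type) (x0 : T) (s : seq T) i : (i < size s)%N -> List.In (nth x0 s i) s.
Proof. by elim: s i => [|x s IH] [|i] //= i_lt; [left | right; apply: IH]. Qed.

Lemma seq_choice (A B : Type) (a0 : A) (b0 : B) (R : A -> B -> Prop) (s : seq A) :
  (forall x, List.In x s -> exists y, R x y) ->
  exists t : seq B, size t = size s /\ forall i, (i < size s)%N -> R (nth a0 s i) (nth b0 t i).
Proof.
elim: s => [|x s IH] R_s; first by exists [::].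
have [y Rxy] := R_s x (or_introl erefl).
have [t [size_t R_st]] := IH (fun z z_in => R_s z (or_intror z_in)).
by exists (y :: t); split => [|[|i] i_lt] //=; [rewrite size_t | apply: R_st].
Qed.

Section FreeAlgebra.
Variables (F : fieldType) (X : finType).
Local Open Scope ring_scope.
Local Notation P := (ncpoly F X).
Local Notation W := (word X).
Local Notation mon := (@nc_mon F X).
Local Notation z0 := (@nc_zero F X).

(** * Monomials in F<X> *)

Lemma nc_mul_monl (a : W) (q : P) w :
  nc_mul (mon a) q w = if take (size a) w == a then q (drop (size a) w) else 0.
Proof.
pose G k := (take k w == a)%:R * q (drop k w).
have term (i : 'I_(size w).+1) : G i = if i == size a :> nat then G i else 0.
  case: eqP => [_ | i_neq] //; rewrite /G; case: eqP => [take_i | _]; last by rewrite mul0r.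
  by case: i_neq; rewrite -take_i size_takel // -ltnS.
rewrite /nc_mul /nc_mon (eq_bigr _ (fun i _ => term i)) -big_mkcond big_ord1_eq ltnS /G.
case: leqP => a_size; first by case: eqP; rewrite ?mul1r ?mul0r.
by rewrite take_oversize ?(ltnW a_size) //; case: eqP => // w_a; move: a_size; rewrite -w_a ltnn.
Qed.

Lemma nc_mul_monr (b : W) (q : P) w :
  nc_mul q (mon b) w =
  if drop (size w - size b) w == b then q (take (size w - size b) w) else 0.
Proof.
pose G k := q (take k w) * (drop k w == b)%:R.
have term (i : 'I_(size w).+1) : G i = if i == (size w - size b)%N :> nat then G i else 0.
  case: eqP => [_ | i_neq] //; rewrite /G; case: eqP => [drop_i | _]; last by rewrite mulr0.
  by case: i_neq; rewrite -drop_i size_drop; have := ltn_ord i; lia.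
rewrite /nc_mul /nc_mon (eq_bigr _ (fun i _ => term i)) -big_mkcond big_ord1_eq ltnS leq_subr /G.
by case: eqP; rewrite ?mulr1 ?mulr0.
Qed.

Lemma nc_mul_mon (u v : W) : nc_mul (mon u) (mon v) = mon (u ++ v).
Proof.
apply: functional_extensionality => w; rewrite nc_mul_monl /nc_mon.
case: (w =P u ++ v) => [->|w_neq]; first by rewrite take_size_cat // drop_size_cat // !eqxx.
case: eqP => take_u //; case: eqP => drop_v //; case: w_neq.
by rewrite -(cat_take_drop (size u) w) take_u drop_v.
Qed.

Lemma nc_mulZl (c : F) (p q : P) w :
  nc_mul (fun u => c * p u) q w = c * nc_mul p q w.
Proof. by rewrite /nc_mul mulr_sumr; apply: eq_bigr => i _; rewrite mulrA. Qed.

Lemma nc_mul_mon_cat (g : P) (a b t : W) :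
  nc_mul (mon a) (nc_mul g (mon b)) (a ++ t ++ b) = g t.
Proof.
rewrite nc_mul_monl take_size_cat // eqxx drop_size_cat // nc_mul_monr.
by rewrite size_cat addnK drop_size_cat // eqxx take_size_cat.
Qed.

Lemma nc_mul_mon_supp (g : P) (a b u : W) : nc_mul (mon a) (nc_mul g (mon b)) u != 0 ->
  exists t, u = a ++ t ++ b /\ g t != 0.
Proof.
rewrite nc_mul_monl; case: (take (size a) u =P a) => [a_pre | _]; last by rewrite eqxx.
rewrite nc_mul_monr; case: (_ =P b) => [b_suf g_t | _]; last by rewrite eqxx.
set v := drop (size a) u in b_suf g_t; set k := (size v - size b)%N in b_suf g_t.
exists (take k v); split => //.
by rewrite -b_suf cat_take_drop /v -{1}a_pre cat_take_drop.
Qed.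

Lemma fin_supp_mon (u : W) : fin_supp (mon u).
Proof. by exists [:: u] => w; rewrite inE /nc_mon => /negbTE ->. Qed.

Lemma fin_supp_combine (op : F -> F -> F) (p q : P) : op 0 0 = 0 ->
  fin_supp p -> fin_supp q -> fin_supp (fun w => op (p w) (q w)).
Proof.
move=> op00 [s supp_p] [t supp_q]; exists (s ++ t) => w.
by rewrite mem_cat negb_or => /andP [ws wt]; rewrite supp_p // supp_q.
Qed.

Lemma fin_supp_mul (p q : P) : fin_supp p -> fin_supp q -> fin_supp (nc_mul p q).
Proof.
move=> [s supp_p] [t supp_q]; exists [seq u ++ v | u <- s, v <- t] => w w_out.
rewrite /nc_mul big1 // => i _.
case: (boolP (take i w \in s)) => ws; last by rewrite supp_p // mul0r.
case: (boolP (drop i w \in t)) => wt; last by rewrite supp_q // mulr0.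
by move/negP: w_out; case; rewrite -[X in X \in _](cat_take_drop i w); apply: allpairs_f.
Qed.

Lemma fin_supp_is_ideal : is_ideal (@fin_supp F X).
Proof.
split => //; first by exists [::].
- by move=> p q; apply: fin_supp_combine; rewrite addr0.
- by move=> p q; apply: fin_supp_mul.
- by move=> p q; apply: fin_supp_mul.
Qed.

Lemma lin_comb_cons (c : nat -> F) (p : P) (ps : seq P) w :
  lin_comb c (p :: ps) w = c 0%N * p w + lin_comb (fun i => c i.+1) ps w.
Proof. by rewrite /lin_comb /= big_ord_recl. Qed.

Section Ideal.
Variable K : P -> Prop.
Hypothesis K_ideal : is_ideal K.

Lemma ideal_ext (p q : P) : K p -> (forall w, p w = q w) -> K q.
Proof. by move=> Kp /functional_extensionality <-. Qed.

Lemma ideal_fin_supp p : K p -> fin_supp p.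
Proof. by case: K_ideal => K_fin _ _ _ _; apply: K_fin. Qed.

Lemma ideal0 (p : P) : (forall w, p w = 0) -> K p.
Proof. by case: K_ideal => _ K0 _ _ _ p0; apply: ideal_ext K0 _ => w; rewrite p0. Qed.

Lemma idealD (p q : P) : K p -> K q -> K (fun w => p w + q w).
Proof. by case: K_ideal => _ _ KD _ _; apply: KD. Qed.

Lemma ideal_mul_mon (a b : W) (g : P) : K g -> K (nc_mul (mon a) (nc_mul g (mon b))).
Proof.
case: K_ideal => _ _ _ Kl Kr Kg.
by apply: Kl (fin_supp_mon a) _; apply: Kr Kg (fin_supp_mon b).
Qed.

Lemma idealZ (c : F) (q : P) : K q -> K (fun w => c * q w).
Proof.
case: K_ideal => _ _ _ Kl _ Kq.
have cst : fin_supp (fun u => c * mon [::] u).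
  by exists [:: [::]] => w; rewrite inE /nc_mon => /negbTE ->; rewrite mulr0.
by apply: ideal_ext (Kl _ _ cst Kq) _ => w; rewrite nc_mulZl nc_mul_monl take0 drop0 eqxx.
Qed.

Lemma ideal_lin_comb (c : nat -> F) (qs : seq P) :
  (forall i, (i < size qs)%N -> K (nth z0 qs i)) -> K (lin_comb c qs).
Proof.
elim: qs c => [|q qs IH] c Kqs; first by apply: ideal0 => w; rewrite /lin_comb big_ord0.
apply: ideal_ext (idealD (idealZ (c 0%N) (Kqs 0%N isT)) (IH (fun i => c i.+1) _)) _.
  by move=> i; apply: (Kqs i.+1).
by move=> w; rewrite lin_comb_cons.
Qed.

Lemma ideal_lin_comb_sub (c : nat -> F) (ps rs : seq P) : size ps = size rs ->
  (forall i, (i < size ps)%N -> K (fun w => nth z0 ps i w - nth z0 rs i w)) ->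
  K (fun w => lin_comb c ps w - lin_comb c rs w).
Proof.
elim: ps rs c => [|p ps IH] [|r rs] c //= size_eq Kpr.
  by apply: ideal0 => w; rewrite /lin_comb !big_ord0 subrr.
have {}size_eq : size ps = size rs by case: size_eq.
apply: ideal_ext (idealD (idealZ (c 0%N) (Kpr 0%N isT)) (IH rs (fun i => c i.+1) size_eq _)) _.
  by move=> i; apply: (Kpr i.+1).
by move=> w; rewrite !lin_comb_cons /= mulrBr opprD addrACA.
Qed.

End Ideal.

Lemma lin_comb_mon (c : nat -> F) (ws : seq W) w : uniq ws ->
  lin_comb c (map mon ws) w = if w \in ws then c (index w ws) else 0.
Proof.
elim: ws c => [|x ws IH] c /=; first by rewrite /lin_comb big_ord0.
move=> /andP [xws uws]; rewrite lin_comb_cons IH // inE /nc_mon.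
case: (w =P x) => [->|wx] /=; first by rewrite eqxx (negbTE xws) mulr1 addr0.
by rewrite eq_sym; case: eqP => // _; rewrite mulr0 add0r.
Qed.

Lemma exists_lin_comb_eq0 (rs : seq P) (ws : seq W) :
  (forall i w, (i < size rs)%N -> w \notin ws -> nth z0 rs i w = 0) ->
  (size ws < size rs)%N ->
  exists c : nat -> F, (exists2 i, (i < size rs)%N & c i != 0) /\ forall w, lin_comb c rs w = 0.
Proof.
move=> supp_rs size_lt.
pose M : 'M[F]_(size rs, size ws) := \matrix_(i, j) nth z0 rs i (nth [::] ws j).
have /matrix0Pn [i0 [j0 ker_ij]] : kermx M != 0.
  by rewrite kermx_eq0 -row_leq_rank -ltnNge (leq_ltn_trans (rank_leq_col M)).
exists (fun l => if (l < size rs)%N then kermx M i0 (insubd j0 l) else 0); split.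
  by exists j0; rewrite ?ltn_ord ?valKd.
move=> w; rewrite /lin_comb; case: (boolP (w \in ws)) => [wws | w_out].
  have jw : (index w ws < size ws)%N by rewrite index_mem.
  have /matrixP/(_ i0 (Ordinal jw)) := mulmx_ker M; rewrite !mxE => ker0.
  rewrite -[RHS]ker0; apply: eq_bigr => l _; rewrite ltn_ord valKd [M _ _]mxE /= nth_index //.
by rewrite big1 // => l _; rewrite supp_rs ?mulr0.
Qed.

(** * Dimension of the filtration pieces *)

Lemma indep_mod_size_le (K : P -> Prop) (ws : seq W) (ps rs : seq P) :
  is_ideal K -> indep_mod K ps -> size rs = size ps ->
  (forall i, (i < size ps)%N -> K (fun w => nth z0 ps i w - nth z0 rs i w)) ->
  (forall i w, (i < size rs)%N -> w \notin ws -> nth z0 rs i w = 0) ->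
  (size ps <= size ws)%N.
Proof.
move=> K_ideal ps_indep size_rs K_ps_rs supp_rs; rewrite leqNgt -size_rs; apply/negP => size_lt.
have [c [[i i_lt /negP ci] rs0]] := exists_lin_comb_eq0 supp_rs size_lt.
apply/ci/eqP; apply: (ps_indep c); last by rewrite -size_rs.
apply: ideal_ext (ideal_lin_comb_sub K_ideal c (esym size_rs) K_ps_rs) _ => w.
by rewrite rs0 subr0.
Qed.

Fixpoint words_of_size (k : nat) : seq W :=
  if k is k'.+1 then [seq x :: w | x <- enum X, w <- words_of_size k'] else [:: [::]].

Lemma mem_words_of_size k w : (w \in words_of_size k) = (size w == k).
Proof.
elim: k w => [|k IH] [|x w] //=; first by apply/allpairsP => -[[? ?] []].
apply/allpairsP/idP => [[[y v] /= [_ v_in [_ ->]]] | size_w]; first by rewrite eqSS -IH.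
by exists (x, w); rewrite mem_enum IH -eqSS.
Qed.

Definition words_upto (n : nat) : seq W :=
  undup (flatten [seq words_of_size k | k <- iota 0 n.+1]).

Lemma mem_words_upto n w : (w \in words_upto n) = (size w <= n)%N.
Proof.
rewrite mem_undup; apply/flattenP/idP => [[s /mapP [k k_in ->]] | w_le].
  by rewrite mem_words_of_size => /eqP ->; move: k_in; rewrite mem_iota ltnS.
by exists (words_of_size (size w)); rewrite ?mem_words_of_size //; apply: map_f; rewrite mem_iota ltnS.
Qed.

Lemma uniq_words_upto n : uniq (words_upto n).
Proof. exact: undup_uniq. Qed.

Lemma deg_le_words_upto n (p : P) w : deg_le n p -> w \notin words_upto n -> p w = 0.
Proof. by move=> p_deg; rewrite mem_words_upto -ltnNge => /p_deg. Qed.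

Lemma is_quot_filt_dim_exists (K : P -> Prop) n : is_ideal K -> exists k, is_quot_filt_dim K n k.
Proof.
move=> K_ideal.
pose indep_of_size k := asbool (exists ps : seq P,
  size ps = k /\ (forall p, List.In p ps -> deg_le n p) /\ indep_mod K ps).
have ex0 : exists k, indep_of_size k.
  by exists 0%N; apply/asboolP; exists [::]; split=> //; split => // c.
have bounded k : indep_of_size k -> (k <= size (words_upto n))%N.
  move=> /asboolP [ps [<- [ps_deg ps_indep]]].
  apply: (indep_mod_size_le K_ideal ps_indep (erefl _)) => [i _ | i w i_lt].
    by apply: ideal0 => // w; rewrite subrr.
  by apply: deg_le_words_upto; apply: ps_deg; apply: In_nth.
have [k /asboolP [ps [ps_size ps_good]] k_max] := ex_maxnP ex0 bounded.
exists k; split; first by exists ps.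
by move=> qs qs_deg qs_indep; apply: k_max; apply/asboolP; exists qs.
Qed.

Lemma quot_filt_dimP (K : P -> Prop) n : is_ideal K -> is_quot_filt_dim K n (quot_filt_dim K n).
Proof. by move=> K_ideal; apply: epsilon_spec; apply: is_quot_filt_dim_exists. Qed.

Lemma quot_filt_dim_ge (K : P -> Prop) n (ps : seq P) : is_ideal K ->
  (forall p, List.In p ps -> deg_le n p) -> indep_mod K ps ->
  (size ps <= quot_filt_dim K n)%N.
Proof. by move=> K_ideal; case: (quot_filt_dimP n K_ideal) => _; apply. Qed.

Lemma quot_filt_dim_le (K : P -> Prop) n (ws : seq W) : is_ideal K ->
  (forall p, deg_le n p ->
     exists r : P, K (fun w => p w - r w) /\ forall w, w \notin ws -> r w = 0) ->
  (quot_filt_dim K n <= size ws)%N.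
Proof.
move=> K_ideal reduce; case: (quot_filt_dimP n K_ideal) => [[ps [<- [ps_deg ps_indep]]] _].
have [rs [size_rs rs_red]] := seq_choice z0 z0 (fun p p_in => reduce p (ps_deg p p_in)).
apply: (indep_mod_size_le K_ideal ps_indep size_rs) => [i /rs_red [] // | i w].
by rewrite size_rs => /rs_red [_]; apply.
Qed.

(** * Normal words *)

Lemma deg_le_map_mon n (ws : seq W) : (forall u, u \in ws -> (size u <= n)%N) ->
  forall p, List.In p (map mon ws) -> deg_le n p.
Proof.
elim: ws => [|x ws IH] ws_le p //= [<- w w_gt | p_in].
  by rewrite /nc_mon; case: eqP => // w_x; move: w_gt; rewrite w_x ltnNge ws_le ?mem_head.
by apply: IH => // u u_in; apply: ws_le; rewrite inE u_in orbT.
Qed.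

Section NormalWords.
Variable S : W -> Prop.

Definition normal (w : W) : Prop := forall a s b, w = a ++ s ++ b -> ~ S s.

Lemma normal_catl (a b : W) : normal (a ++ b) -> normal a.
Proof. by move=> ab_normal x s y a_eq; apply: (ab_normal x s (y ++ b)); rewrite a_eq -!catA. Qed.

Lemma normal_catr (a b : W) : normal (a ++ b) -> normal b.
Proof. by move=> ab_normal x s y b_eq; apply: (ab_normal (a ++ x) s y); rewrite b_eq -!catA. Qed.

Lemma normal_notin (w : W) : normal w -> ~ S w.
Proof. by move=> w_normal; apply: (w_normal [::] w [::]); rewrite cats0. Qed.

Lemma not_normalP (w : W) : ~ normal w -> exists a s b, w = a ++ s ++ b /\ S s.
Proof.
move=> w_not; apply: NNPP => no_factor; apply: w_not => a s b w_eq Ss.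
by apply: no_factor; exists a, s, b.
Qed.

Definition normal_words (n : nat) : seq W := [seq w <- words_upto n | asbool (normal w)].

Lemma uniq_normal_words n : uniq (normal_words n).
Proof. exact/filter_uniq/uniq_words_upto. Qed.

Lemma mem_normal_words n w : w \in normal_words n <-> normal w /\ (size w <= n)%N.
Proof. by rewrite mem_filter mem_words_upto; split => [/andP [/asboolP] | [/asboolP -> ->]]. Qed.

Lemma deg_le_normal_words n p : List.In p (map mon (normal_words n)) -> deg_le n p.
Proof. by apply: deg_le_map_mon => u /mem_normal_words []. Qed.

Lemma gen_ideal_is_ideal : is_ideal (gen_ideal (F := F) S).
Proof.
split.
- by move=> p; apply; [apply: fin_supp_is_ideal | move=> u _; apply: fin_supp_mon].
- by move=> K K_ideal _; case: K_ideal.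
- by move=> p q Jp Jq K K_ideal KS; apply: idealD (Jp K _ KS) (Jq K _ KS).
- by move=> p q p_fin Jq K K_ideal KS; case: (K_ideal) => _ _ _ Kl _; apply: Kl (Jq K _ KS).
- by move=> p q Jp q_fin K K_ideal KS; case: (K_ideal) => _ _ _ _ Kr; apply: Kr (Jp K _ KS) _.
Qed.

Lemma gen_ideal_mon (w : W) : ~ normal w -> gen_ideal S (mon w).
Proof.
move=> /not_normalP [a [s [b [-> Ss]]]]; rewrite -!nc_mul_mon.
by apply: (ideal_mul_mon gen_ideal_is_ideal) => K _; apply.
Qed.

Lemma gen_idealE (p : P) : gen_ideal S p <-> fin_supp p /\ forall w, normal w -> p w = 0.
Proof.
split => [Jp | [[s supp_p] p_normal]].
  apply: (Jp (fun q => fin_supp q /\ forall w, normal w -> q w = 0)) => [|u Su]; last first.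
    split=> [|w w_normal]; first exact: fin_supp_mon.
    by rewrite /nc_mon; case: eqP => // w_u; case: (normal_notin w_normal); rewrite w_u.
  split=> [q [] // | |q r [q_fin q0] [r_fin r0] | q r q_fin [r_fin r0] | q r [q_fin q0] r_fin].
  - by split=> //; exists [::].
  - by split=> [|w w_normal]; [apply: fin_supp_combine; rewrite ?addr0 | rewrite /nc_add q0 ?r0 ?addr0].
  - split=> [|w w_normal]; first exact: fin_supp_mul.
    rewrite /nc_mul big1 // => i _; rewrite r0 ?mulr0 //.
    by apply: (@normal_catr (take i w)); rewrite cat_take_drop.
  - split=> [|w w_normal]; first exact: fin_supp_mul.
    rewrite /nc_mul big1 // => i _; rewrite q0 ?mul0r //.
    by apply: (@normal_catl _ (drop i w)); rewrite cat_take_drop.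
pose bad := [seq u <- undup s | ~~ asbool (normal u)].
apply: (ideal_ext (p := lin_comb (fun i => p (nth [::] bad i)) (map mon bad))).
- apply: (ideal_lin_comb gen_ideal_is_ideal) => i; rewrite size_map => i_lt.
  rewrite (nth_map [::]) //; apply: gen_ideal_mon => /asboolP.
  by have := mem_nth [::] i_lt; rewrite mem_filter => /andP [/negP].
- move=> w; rewrite lin_comb_mon ?filter_uniq ?undup_uniq // mem_filter mem_undup.
  case: (asboolP (normal w)) => [/p_normal -> // | w_bad] /=.
  case: (boolP (w \in s)) => [w_in | /supp_p -> //].
  by rewrite nth_index // mem_filter mem_undup w_in andbT; apply/negP => /asboolP.
Qed.

Lemma quot_filt_dim_gen_ideal n :
  quot_filt_dim (gen_ideal (F := F) S) n = size (normal_words n).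
Proof.
apply/eqP; rewrite eqn_leq; apply/andP; split.
  apply: (quot_filt_dim_le gen_ideal_is_ideal) => p p_deg.
  exists (fun w => if asbool (normal w) then p w else 0); split.
    apply/gen_idealE; split=> [|w /asboolP ->]; last by rewrite subrr.
    by exists (words_upto n) => w /(deg_le_words_upto p_deg) ->; case: ifP; rewrite subrr.
  move=> w; case: (asboolP (normal w)) => // w_normal w_out.
  apply: (deg_le_words_upto p_deg); apply: contra w_out; rewrite mem_words_upto => w_le.
  exact/mem_normal_words.
rewrite -(size_map mon); apply: (quot_filt_dim_ge gen_ideal_is_ideal (@deg_le_normal_words n)).
move=> c /gen_idealE [_ c0] i; rewrite size_map => i_lt.
have /mem_normal_words [nth_normal _] := mem_nth [::] i_lt.
have := c0 _ nth_normal; rewrite lin_comb_mon ?uniq_normal_words // mem_nth //.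
by rewrite index_uniq ?uniq_normal_words.
Qed.

End NormalWords.

(** * Reduction modulo an ideal *)

Lemma ncpoly_eq0_or_supp (p : P) : (forall u, p u = 0) \/ exists u, p u != 0.
Proof.
case: (classic (exists u, p u != 0)) => [|p0]; [by right | left => u].
by apply/eqP/negPn/negP => pu; apply: p0; exists u.
Qed.

Section MonomialOrder.
Variable lt : W -> W -> Prop.
Hypothesis lt_order : monomial_order lt.

Definition mon_le (u v : W) : Prop := lt u v \/ u = v.

Lemma mon_le_lt_trans u v w : mon_le u v -> lt v w -> lt u w.
Proof. by case: lt_order => _ lt_trans _ _ _ [uv | ->] // /(lt_trans _ _ _ uv). Qed.

Lemma seq_mon_max (s : seq W) : s != [::] ->
  exists2 m, m \in s & forall u, u \in s -> mon_le u m.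
Proof.
case: lt_order => _ _ lt_total _ _.
elim: s => [|x [|y s] IH] // _.
  by exists x => [|u]; rewrite ?mem_head // inE => /eqP ->; right.
have [m m_in m_max] := IH isT.
have [xm | mx] : mon_le x m \/ lt m x by case: (lt_total x m) => *; [left; left | left; right | right].
  exists m => [|u]; first by rewrite inE m_in orbT.
  by rewrite inE => /predU1P [-> | /m_max].
exists x => [|u]; rewrite ?mem_head // inE => /predU1P [-> | /m_max u_m]; first by right.
by left; apply: mon_le_lt_trans u_m mx.
Qed.

Lemma supp_max (g : P) : fin_supp g -> (exists w, g w != 0) ->
  exists2 m, g m != 0 & forall u, g u != 0 -> mon_le u m.
Proof.
move=> [s supp_g] [w gw].
have in_supp u : g u != 0 -> u \in [seq v <- s | g v != 0].
  by move=> gu; rewrite mem_filter gu; apply: contraR gu => /supp_g ->; rewrite eqxx.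
have [|m] := seq_mon_max (s := [seq v <- s | g v != 0]).
  by apply/eqP => s0; have := in_supp w gw; rewrite s0.
by rewrite mem_filter => /andP [gm _] m_max; exists m => // u /in_supp /m_max.
Qed.

Lemma leading_monomial_mon (w : W) : leading_monomial lt (mon w) w.
Proof. by split=> [|u]; rewrite /nc_mon ?eqxx ?oner_eq0 //; case: (u =P w) => [-> _ []|_]; rewrite /= ?eqxx. Qed.

Lemma leading_monomial_mul_mon (g : P) (a s b : W) : leading_monomial lt g s ->
  leading_monomial lt (nc_mul (mon a) (nc_mul g (mon b))) (a ++ s ++ b).
Proof.
case: lt_order => _ _ _ _ lt_cat [gs g_lead]; split; first by rewrite nc_mul_mon_cat.
move=> u /nc_mul_mon_supp [t [-> gt]] t_s; apply: lt_cat; apply: g_lead gt _.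
by move=> ts; apply: t_s; rewrite ts.
Qed.

Lemma lt_sub_lead (h p : P) (w : W) : leading_monomial lt h w ->
  (forall u, p u != 0 -> mon_le u w) -> forall u, p u - p w / h w * h u != 0 -> lt u w.
Proof.
move=> [hw h_lead] p_le u; case: (u =P w) => [-> | uw]; first by rewrite divfK // subrr eqxx.
case: (eqVneq (h u) 0) => [hu0 pu | hu _]; last exact: h_lead.
by have /p_le [] : p u != 0 by move: pu; rewrite hu0 mulr0 subr0.
Qed.

End MonomialOrder.

Section Reduction.
Variables (lt : W -> W -> Prop) (I : P -> Prop).
Hypotheses (lt_order : monomial_order lt) (I_ideal : is_ideal I).
Local Notation normal := (normal (lead_set lt I)).
Local Notation normal_words := (normal_words (lead_set lt I)).

Lemma normal_words_quot_filt_dim_le n : (size (normal_words n) <= quot_filt_dim I n)%N.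
Proof.
rewrite -(size_map mon); apply: (quot_filt_dim_ge I_ideal (@deg_le_normal_words _ n)).
move=> c Ic i; rewrite size_map => i_lt; apply/eqP; apply: contraT => ci.
set g := lin_comb c _ in Ic.
have g_val u : g u = if u \in normal_words n then c (index u (normal_words n)) else 0.
  by rewrite /g lin_comb_mon // uniq_normal_words.
have [|m gm m_max] := supp_max lt_order (ideal_fin_supp I_ideal Ic).
  by exists (nth [::] (normal_words n) i); rewrite g_val mem_nth // index_uniq // uniq_normal_words.
have m_lead : lead_set lt I m by exists g; split=> //; split=> // u /m_max [um _ | -> []].
move: gm; rewrite g_val; case: ifP => [/mem_normal_words [m_normal _] _ | _]; last by rewrite eqxx.
by case: (normal_notin m_normal m_lead).
Qed.

Definition normal_form_le (p r : P) (w : W) : Prop :=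
  I (fun u => p u - r u) /\ forall u, r u != 0 -> normal u /\ mon_le lt u w.

Lemma normal_form_le0 (p : P) w : (forall u, p u = 0) -> normal_form_le p z0 w.
Proof.
move=> p0; split=> [|u]; last by rewrite /nc_zero eqxx.
by apply: (ideal0 I_ideal) => u; rewrite p0 subr0.
Qed.

Lemma not_normal_lead (w : W) : ~ normal w -> exists2 h, I h & leading_monomial lt h w.
Proof.
move=> /not_normalP [a [s [b [-> [g [Ig g_lead]]]]]].
exists (nc_mul (mon a) (nc_mul g (mon b))); first exact: ideal_mul_mon.
exact: leading_monomial_mul_mon.
Qed.

Lemma normal_form_lt (w : W) :
  (forall v, lt v w -> forall p, fin_supp p -> (forall u, p u != 0 -> mon_le lt u v) ->
     exists r, normal_form_le p r v) ->
  forall p, fin_supp p -> (forall u, p u != 0 -> lt u w) -> exists r, normal_form_le p r w.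
Proof.
move=> IH p p_fin p_lt; case: (ncpoly_eq0_or_supp p) => [p0 | p_ne0].
  by exists z0; apply: normal_form_le0.
have [m pm m_max] := supp_max lt_order p_fin p_ne0.
have [r [Ir r_nf]] := IH m (p_lt m pm) p p_fin m_max.
exists r; split=> // u /r_nf [u_normal u_m]; split=> //.
left; exact: (mon_le_lt_trans lt_order u_m (p_lt m pm)).
Qed.

Lemma exists_normal_form (w : W) (p : P) :
  fin_supp p -> (forall u, p u != 0 -> mon_le lt u w) -> exists r, normal_form_le p r w.
Proof.
case: (lt_order) => _ _ _ lt_wf _.
elim/(well_founded_ind lt_wf): w p => w IH p p_fin p_le.
have fin_supp_sub (h : P) c : fin_supp h -> fin_supp (fun u => p u - c * h u).
  by apply: (fin_supp_combine (op := fun x y => x - c * y)) p_fin; rewrite mulr0 subr0.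
(* Cancel the coefficient of the top word [w]: a normal [w] is kept in the normal form,
   a non-normal one is the leading monomial of some [h] in [I]. *)
case: (classic (normal w)) => [w_normal | /not_normal_lead [h Ih h_lead]].
  have [r [Ir r_nf]] := normal_form_lt IH (fin_supp_sub _ (p w / mon w w) (fin_supp_mon w))
    (lt_sub_lead (leading_monomial_mon lt w) p_le).
  exists (fun u => r u + p w / mon w w * mon w u); split.
    by apply: ideal_ext Ir _ => u; rewrite opprD addrA addrAC.
  move=> u; case: (u =P w) => [-> _ | uw]; first by split=> //; right.
  by rewrite /nc_mon (introF eqP uw) mulr0 addr0 => /r_nf.
have [r [Ir r_nf]] := normal_form_lt IH (fin_supp_sub _ (p w / h w) (ideal_fin_supp I_ideal Ih))
  (lt_sub_lead h_lead p_le).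
exists r; split=> //; apply: ideal_ext (idealD I_ideal Ir (idealZ I_ideal (p w / h w) Ih)) _.
by move=> u; rewrite addrAC subrK.
Qed.

Lemma quot_filt_dim_le_normal_words n B : (n <= B)%N ->
  (forall u v, (size v <= n)%N -> lt u v -> (size u <= B)%N) ->
  (quot_filt_dim I n <= size (normal_words B))%N.
Proof.
move=> n_le_B size_lt; apply: (quot_filt_dim_le I_ideal) => p p_deg.
have p_fin : fin_supp p by exists (words_upto n) => w; apply: deg_le_words_upto.
have [w w_le [r [Ir r_nf]]] : exists2 w : W, (size w <= n)%N & exists r, normal_form_le p r w.
  case: (ncpoly_eq0_or_supp p) => [p0 | p_ne0]; first by exists [::] => //; exists z0; apply: normal_form_le0.
  have [w pw w_max] := supp_max lt_order p_fin p_ne0.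
  exists w; last exact: exists_normal_form p_fin w_max.
  by rewrite leqNgt; apply: contra pw => /p_deg ->.
exists r; split=> // u; apply: contraNeq => /r_nf [u_normal u_w]; apply/mem_normal_words.
by split=> //; case: u_w => [/size_lt -> // | ->]; apply: leq_trans n_le_B.
Qed.

End Reduction.
End FreeAlgebra.

(** * Growth ratios *)

Section GrowthRatio.
Local Open Scope R_scope.

Definition growth_ratio (f : nat -> nat) (n : nat) : R := ln (INR (f n)) / ln (INR n).

Lemma ln_0 : ln 0 = 0.
Proof. by rewrite /ln; case: Rlt_dec => // lt00; case: (Rlt_irrefl _ lt00). Qed.

Lemma ln_INR_ge0 n : 0 <= ln (INR n).
Proof.
case: n => [|n]; first by rewrite [INR 0]/= ln_0; lra.
rewrite -ln_1; apply: ln_le; first lra.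
by rewrite S_INR; have := pos_INR n; lra.
Qed.

Lemma ln_INR_le m n : (m <= n)%N -> ln (INR m) <= ln (INR n).
Proof.
case: m => [|m] mn; first by rewrite [INR 0]/= ln_0; apply: ln_INR_ge0.
by apply: ln_le; [apply: lt_0_INR; apply/ltP | apply: le_INR; apply/leP].
Qed.

Lemma ln_INR_gt0 n : (2 <= n)%N -> 0 < ln (INR n).
Proof.
move=> n_ge2; rewrite -ln_1; apply: ln_increasing; first lra.
by apply: (Rlt_le_trans _ (INR 2)); [rewrite /=; lra | apply: le_INR; apply/leP].
Qed.

Lemma inv_ln_INR_ge0 n : 0 <= / ln (INR n).
Proof.
case: (Rle_lt_or_eq_dec _ _ (ln_INR_ge0 n)) => [/Rinv_0_lt_compat/Rlt_le // | <-].
(* Here n <= 1: ln n = 0, and Rocq's junk value [/ 0 = 0] applies. *)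
by rewrite Rinv_0; lra.
Qed.

Lemma growth_ratio_ge0 f n : 0 <= growth_ratio f n.
Proof. exact: Rmult_le_pos (ln_INR_ge0 _) (inv_ln_INR_ge0 n). Qed.

Lemma LimSup_growth_ratio_le (f g : nat -> nat) : (forall n, (f n <= g n)%N) ->
  Rbar_le (LimSup_seq (growth_ratio f)) (LimSup_seq (growth_ratio g)).
Proof.
move=> fg; apply: LimSup_le; exists 0%nat => n _.
exact: Rmult_le_compat_r (inv_ln_INR_ge0 n) (ln_INR_le (fg n)).
Qed.

Lemma Rbar_le_mult_eps (x : Rbar) (c l : R) : 0 <= c -> 0 <= l ->
  (forall e, 0 < e -> Rbar_le x ((c + e) * (l + e))) -> Rbar_le x (c * l).
Proof.
case: x => [x | | ] c_ge0 l_ge0 x_le //=; last by apply: (x_le 1); lra.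
apply: Rle_plus_epsilon => eps eps_gt0.
have [e [e_gt0 [e_le1 e_eps]]] : exists e, 0 < e /\ e <= 1 /\ e * (c + l + 1) <= eps.
  exists (Rmin 1 (eps / (c + l + 1))); split; last split.
  - by apply: Rmin_glb_lt; [lra | apply: Rdiv_lt_0_compat; lra].
  - exact: Rmin_l.
  - apply: (Rle_trans _ (eps / (c + l + 1) * (c + l + 1))).
      by apply: Rmult_le_compat_r; [lra | apply: Rmin_r].
    by apply: Req_le; field; lra.
have := x_le e e_gt0; rewrite /=; nra.
Qed.

Lemma LimSup_seq_le_mult_comp (u v w : nat -> R) (phi : nat -> nat) (c : R) :
  0 < c -> (forall n, (n <= phi n)%N) -> (forall n, 0 <= v n) ->
  (forall e, 0 < e -> eventually (fun n => w n <= c + e)) ->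
  eventually (fun n => u n <= v (phi n) * w n) ->
  Rbar_le (LimSup_seq u) (Rbar_mult c (LimSup_seq v)).
Proof.
move=> c_gt0 phi_ge v_ge0 w_le u_le.
have : Rbar_le 0 (LimSup_seq v).
  by rewrite -(LimSup_seq_const 0); apply: LimSup_le; exists 0%nat => n _.
have [[l | | ] v_lim] := ex_LimSup_seq v; rewrite (is_LimSup_seq_unique _ _ v_lim) => l_ge0;
  last by case: l_ge0.
  apply: Rbar_le_mult_eps; [lra | done | move=> e e_gt0].
  have [_ [N v_lt]] := v_lim (mkposreal e e_gt0).
  rewrite -LimSup_seq_const; apply: LimSup_le.
  have phi_big : eventually (fun n => (N <= phi n)%nat).
    by exists N => n /leP n_ge; apply: leq_trans n_ge (phi_ge n).
  apply: (filter_imp _ _ _ (filter_and _ _ u_le (filter_and _ _ (w_le e e_gt0) phi_big))).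
  move=> n [u_n [w_n /leP/v_lt /= v_n]]; have := v_ge0 (phi n); nra.
have -> : Rbar_mult c p_infty = p_infty.
  by apply: is_Rbar_mult_unique; apply: is_Rbar_mult_sym; apply: is_Rbar_mult_p_infty_pos.
by case: (LimSup_seq u).
Qed.

Lemma leq_pmul_expn (M d n : nat) : (1 <= M)%N -> (1 <= d)%N -> (n <= M * n ^ d)%N.
Proof.
move=> M_ge1 d_ge1; case: n => [|n] //; apply: leq_trans (leq_pmull _ M_ge1).
by rewrite -{1}(expn1 n.+1) leq_pexp2l.
Qed.

Lemma INR_muln m n : INR (m * n)%N = INR m * INR n.
Proof. by rewrite -multE mult_INR. Qed.

Lemma INR_expn m n : INR (m ^ n)%N = INR m ^ n.
Proof. by elim: n => [|n IH] //; rewrite expnS INR_muln IH. Qed.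

Lemma ln_ratio_le (M d : nat) (e : R) : (1 <= M)%N -> 0 < e ->
  eventually (fun n => ln (INR (M * n ^ d)) / ln (INR n) <= INR d + e).
Proof.
move=> M_ge1 e_gt0; have [K K_gt] := INR_unbounded (exp (ln (INR M) / e)).
exists (maxn 2 K) => n /leP; rewrite geq_max => /andP [n_ge2 n_geK].
have n_gt0 : 0 < INR n by apply: lt_0_INR; apply/ltP; apply: leq_trans n_ge2.
have M_gt0 : 0 < INR M by apply: lt_0_INR; apply/ltP.
have ln_n := ln_INR_gt0 n_ge2.
have ln_M_le : ln (INR M) / e <= ln (INR n).
  rewrite -[X in X <= _]ln_exp; apply: ln_le; first exact: exp_pos.
  by apply/Rlt_le/(Rlt_le_trans _ _ _ K_gt)/le_INR/leP.
rewrite INR_muln INR_expn ln_mult ?ln_pow //; last exact: pow_lt.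
apply: (Rmult_le_reg_r (ln (INR n))) => //; rewrite /Rdiv Rmult_assoc Rinv_l; last lra.
have : ln (INR M) <= e * ln (INR n).
  have -> : ln (INR M) = e * (ln (INR M) / e) by field; lra.
  by apply: Rmult_le_compat_l; lra.
nra.
Qed.

Lemma LimSup_growth_ratio_poly (f g : nat -> nat) (d M : nat) : (1 <= d)%N -> (1 <= M)%N ->
  (forall n, (1 <= n)%N -> (f n <= g (M * n ^ d))%N) ->
  Rbar_le (LimSup_seq (growth_ratio f)) (Rbar_mult (INR d) (LimSup_seq (growth_ratio g))).
Proof.
move=> d_ge1 M_ge1 fg.
apply: (LimSup_seq_le_mult_comp (phi := fun n => (M * n ^ d)%N)
  (w := fun n => ln (INR (M * n ^ d)) / ln (INR n))) => [|n|n|e|].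
- by apply: lt_0_INR; apply/ltP.
- exact: leq_pmul_expn.
- exact: growth_ratio_ge0.
- exact: ln_ratio_le.
exists 2%nat => n /leP n_ge2.
have ln_m : 0 < ln (INR (M * n ^ d)) by apply/ln_INR_gt0/(leq_trans n_ge2)/leq_pmul_expn.
have ln_n := ln_INR_gt0 n_ge2.
rewrite /growth_ratio [X in _ <= X](_ : _ = ln (INR (g (M * n ^ d)%N)) / ln (INR n)); last by field; lra.
exact: Rmult_le_compat_r (inv_ln_INR_ge0 n) (ln_INR_le (fg n (ltnW n_ge2))).
Qed.

End GrowthRatio.

Section PolynomialBound.
Local Open Scope R_scope.

Lemma real_poly_eval_le (a : nat -> R) (d : nat) (x y : R) : 0 <= x -> x <= y -> 1 <= y ->
  real_poly_eval a d x <= sum_f_R0 (fun i => Rabs (a i)) d * y ^ d.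
Proof.
move=> x_ge0 xy y_ge1; rewrite Rmult_comm scal_sum; apply: sum_Rle => i i_le.
apply: (Rle_trans _ (Rabs (a i) * x ^ i)); first exact/Rmult_le_compat_r/Rle_abs/pow_le.
apply: Rmult_le_compat_l; first exact: Rabs_pos.
by apply: (Rle_trans _ (y ^ i)); [apply: pow_incr | apply: Rle_pow].
Qed.

Lemma poly_size_bound (T : Type) (size : T -> nat) (rel : T -> T -> Prop)
    (a : nat -> R) (d N : nat) :
  (forall u v, (N <= size u)%N -> rel u v -> INR (size u) <= real_poly_eval a d (INR (size v))) ->
  exists2 M, (1 <= M)%N &
    forall n u v, (1 <= n)%N -> (size v <= n)%N -> rel u v -> (size u <= M * n ^ d)%N.
Proof.
move=> rel_bound; have [K K_gt] := INR_unbounded (sum_f_R0 (fun i => Rabs (a i)) d).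
exists (maxn 1 (maxn N K)) => [|n u v n_ge1 v_le uv]; first exact: leq_maxl.
have n_pow : (1 <= n ^ d)%N by rewrite expn_gt0 n_ge1.
case: (leqP N (size u)) => [N_le | u_lt]; last first.
  apply: leq_trans (ltnW u_lt) (leq_trans _ (leq_pmulr _ n_pow)).
  by rewrite !leq_max leqnn !orbT.
have n_ge1R : 1 <= INR n by apply: (le_INR 1); apply/leP.
apply/leP/INR_le; rewrite INR_muln INR_expn.
apply: Rle_trans (rel_bound u v N_le uv) _.
apply: Rle_trans (real_poly_eval_le a d (pos_INR _) (le_INR _ _ (elimT leP v_le)) n_ge1R) _.
apply: Rmult_le_compat_r; first by apply: pow_le; lra.
apply/Rlt_le/(Rlt_le_trans _ _ _ K_gt)/le_INR/leP.
by rewrite !leq_max leqnn !orbT.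
Qed.

End PolynomialBound.

Theorem theorem1 (F : fieldType) (X : finType) (I : ncpoly F X -> Prop)
  (lt : word X -> word X -> Prop) (a : nat -> R) (d : nat) (N : nat) :
  is_ideal I ->
  monomial_order lt ->
  (1 <= d)%N ->
  a d <> R0 ->
  (forall u v : word X, (N <= size u)%N -> lt u v ->
     Rle (INR (size u)) (real_poly_eval a d (INR (size v)))) ->
  Rbar_le (GKdim (assoc_monomial_ideal lt I)) (GKdim I) /\
  Rbar_le (GKdim I) (Rbar_mult (INR d) (GKdim (assoc_monomial_ideal lt I))).
Proof.
move=> I_ideal lt_order d_ge1 _ poly_growth.
have dim_J n : quot_filt_dim (assoc_monomial_ideal lt I) n = size (normal_words (lead_set lt I) n).
  exact: quot_filt_dim_gen_ideal.
split.
  apply: LimSup_growth_ratio_le => n; rewrite dim_J.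
  exact: normal_words_quot_filt_dim_le.
have [M M_ge1 size_bound] := poly_size_bound poly_growth.
apply: (LimSup_growth_ratio_poly d_ge1 M_ge1) => n n_ge1; rewrite dim_J.
apply: (quot_filt_dim_le_normal_words lt_order I_ideal); first exact: leq_pmul_expn.
by move=> u v v_le; apply: size_bound.
Qed.
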